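(* For every integer $l\ge1$, let $m=5l+3$, $L_1=[2l+1]$, $L_2=\{2l+2,\dots,4l+2\}$, $L_3=\{4l+3,\dots,5l+3\}$, and let $O_{L_s}$, $E_{L_s}$ be the sets of odd and even elements of $L_s$. Let $\mathcal{I}_7(l)$ be the instance on $[m]$ with $A_i=E_{L_1}\cup(L_2\setminus\{i+2l+1\})\cup L_3$ for $i\in O_{L_1}$; $A_i=O_{L_2}\cup(L_1\setminus\{i\})\cup L_3$ for $i\in E_{L_1}$; $A_i=O_{L_2}\cup(L_1\setminus\{i-(2l+1)\})\cup L_3$ for $i\in E_{L_2}$; $A_i=E_{L_1}\cup(L_2\setminus\{i\})\cup L_3$ for $i\in O_{L_2}$; $A_i=\{2(i-4l-2)-1,\ 2(i-3l-2)\}$ for $i\in L_3$. Then the UMCD algorithm on $\mathcal{I}_7(l)$ outputs $\beta_{\text{UMCD}}(\mathcal{I}_7(l))=l+2$.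
   Context: $B_i=[m]\setminus(A_i\cup\{i\})$. For a $0/1$ matrix $\boldsymbol{G}$ with columns indexed by $[m]$, $\boldsymbol{G}_{[k]}^L$ is the submatrix of the first $k$ rows and columns $L$; $\mathrm{mcm}(\boldsymbol{G})$ is the maximum number of $1$-entries no two in a common row or column (0 if no columns). UMCD algorithm: $N=[m]$, $k=0$; while $N\ne\emptyset$: $k\leftarrow k+1$; pick $w\in N$ minimizing $|A_w|$ over $N$ (arbitrary tie-breaking); row $k$ of $\boldsymbol{G}$ is the indicator vector of $\{w\}\cup A_w$; remove $w$ from $N$; remove every $i\in N$ with $\mathrm{mcm}(\boldsymbol{G}_{[k]}^{\{i\}\cup B_i})=\mathrm{mcm}(\boldsymbol{G}_{[k]}^{B_i})+1$; output $\beta_{\text{UMCD}}=k$. *)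

From mathcomp Require Import all_boot.
Set Implicit Arguments. Unset Strict Implicit. Unset Printing Implicit Defensive.

(* A 0/1 matrix G with columns indexed by [m] is represented by the sequence
   of its rows, each row being the sequence of columns carrying a 1-entry.
   The first k rows G_[k] are simply the matrix built after k iterations. *)

Definition is_matching (G : seq (seq nat)) (L : pred nat) (M : seq (nat * nat)) : bool :=
  uniq (map fst M) && uniq (map snd M) &&
  all (fun p => [&& p.1 < size G, L p.2 & p.2 \in nth [::] G p.1]) M.

Definition mcm_eq (G : seq (seq nat)) (L : pred nat) (n : nat) : Prop :=
  (exists M, is_matching G L M /\ size M = n) /\
  (forall M, is_matching G L M -> size M <= n).

Section UMCD.
Variable m : nat.
Variable A : nat -> seq nat.  (* A_i, given as a duplicate-free sequence *)

Definition inm (j : nat) : bool := (1 <= j) && (j <= m).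

Definition Bset (i : nat) : pred nat := fun j => [&& inm j, j \notin A i & j != i].

Definition removed (G : seq (seq nat)) (i : nat) : Prop :=
  exists a b, mcm_eq G (fun j => (j == i) || Bset i j) a /\ mcm_eq G (Bset i) b /\ a = b + 1.

(* States (N, G) reachable by the UMCD algorithm, for any tie-breaking. *)
Inductive umcd_reach : seq nat -> seq (seq nat) -> Prop :=
| umcd_start : umcd_reach (iota 1 m) [::]
| umcd_step N G w N' :
    umcd_reach N G ->
    w \in N ->
    (forall v, v \in N -> size (A w) <= size (A v)) ->
    (forall i, i \in N' <-> [/\ i \in N, i != w & ~ removed (rcons G (w :: A w)) i]) ->
    umcd_reach N' (rcons G (w :: A w)).
(* A run terminates when N = [::]; its output beta_UMCD is k = size G. *)
End UMCD.

Section I7.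
Variable l : nat.
Definition L1 (j : nat) : bool := (1 <= j) && (j <= 2*l+1).
Definition L2 (j : nat) : bool := (2*l+2 <= j) && (j <= 4*l+2).
Definition L3 (j : nat) : bool := (4*l+3 <= j) && (j <= 5*l+3).

Definition inA7 (i j : nat) : bool :=
  if L1 i && odd i then
    [|| L1 j && ~~ odd j, L2 j && (j != i + (2*l+1)) | L3 j]
  else if L1 i && ~~ odd i then
    [|| L2 j && odd j, L1 j && (j != i) | L3 j]
  else if L2 i && ~~ odd i then
    [|| L2 j && odd j, L1 j && (j != i - (2*l+1)) | L3 j]
  else if L2 i && odd i then
    [|| L1 j && ~~ odd j, L2 j && (j != i) | L3 j]
  else if L3 i then
    (j == 2 * (i - (4*l+2)) - 1) || (j == 2 * (i - (3*l+2)))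
  else false.

Definition A7 (i : nat) : seq nat := [seq j <- iota 1 (5*l+3) | inA7 i j].
End I7.

From mathcomp Require Import all_boot zify.
Set Implicit Arguments. Unset Strict Implicit. Unset Printing Implicit Defensive.

(* For v in L_3 we have A_v = {a_v, b_v} with b_v = a_v + 2l + 1, and these l + 1 pairs
   partition O_{L_1} ∪ E_{L_2}; every other A_w has at least three elements.  So UMCD
   first picks the vertices of L_3, in some order.  For i in L_1 ∪ L_2, the set B_i
   consists of the paired elements of the parity of i, with i and its partner
   i ± (2l + 1) exchanged; hence B_i meets every pair exactly once and, when i is
   paired, contains the partner of i.  While only rows of L_3 are present, a matching
   using column i can trade it for the partner of i, which lies in the same row and in
   no other, so nothing is removed.  Once L_3 is exhausted, UMCD picks some w in
   L_1 ∪ L_2, and for every other i the columns of B_i match only the l + 1 pair rows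
   while {i} ∪ B_i matches all l + 2 rows: everything left is removed and the run
   stops. *)

Lemma uniq_map_inj_in (T U : eqType) (f : T -> U) (s : seq T) :
  uniq (map f s) -> {in s &, injective f}.
Proof.
elim: s => //= x s IH /andP[fxs us] p q.
rewrite !in_cons => /orP[/eqP->|ps] /orP[/eqP->|qs] // e.
- by case/negP: fxs; rewrite e map_f.
- by case/negP: fxs; rewrite -e map_f.
- exact: IH.
Qed.

Lemma seq_argmin (T : eqType) (f : T -> nat) (s : seq T) x :
  x \in s -> exists2 w, w \in s & forall v, v \in s -> f w <= f v.
Proof.
move=> xs; have exn : exists n, has (fun v => f v == n) s.
  by exists (f x); apply/hasP; exists x.
case: (ex_minnP exn) => n /hasP[w ws /eqP fw] nmin.
by exists w => // v vs; rewrite fw; apply: nmin; apply/hasP; exists v.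
Qed.

Section Matchings.
Variables (G : seq (seq nat)) (L : pred nat).

Lemma size_matching_le_rows M : is_matching G L M -> size M <= size G.
Proof.
case/andP=> /andP[uM _] /allP inG.
rewrite -(size_map fst) -(size_iota 0 (size G)).
apply: uniq_leq_size => // _ /mapP[p /inG /and3P[pG _ _] ->].
by rewrite mem_iota.
Qed.

Lemma size_matching_le_cols M s :
  {subset L <= s} -> is_matching G L M -> size M <= size s.
Proof.
move=> Ls /andP[/andP[_ uM] /allP inG].
rewrite -(size_map snd); apply: uniq_leq_size => // _ /mapP[p /inG /and3P[_ Lp _] ->].
exact: Ls.
Qed.

Lemma matching_of_sdr cs :
  uniq cs -> size cs = size G ->
  all (fun cr => L cr.1 && (cr.1 \in cr.2)) (zip cs G) ->
  exists2 M, is_matching G L M & size M = size G.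
Proof.
move=> ucs csG /allP sdr; set rs := iota 0 (size cs).
have szrs : size rs = size cs by rewrite size_iota.
exists (zip rs cs); last by rewrite size_zip szrs minnn.
rewrite /is_matching -[map fst _]/(unzip1 _) -[map snd _]/(unzip2 _).
rewrite unzip1_zip ?unzip2_zip ?szrs //.
rewrite iota_uniq ucs /=; apply/allP => p /(nthP (0, 0))[k].
rewrite size_zip szrs minnn => kcs <-.
rewrite nth_zip // nth_iota //= add0n -csG kcs.
have := sdr (nth (0, [::]) (zip cs G) k); rewrite nth_zip //; apply.
by rewrite -(nth_zip 0 [::]) // mem_nth // size_zip csG minnn -csG.
Qed.

Lemma is_matching_catr G' M : is_matching G L M -> is_matching (G ++ G') L M.
Proof.
case/andP=> uM /allP inG; rewrite /is_matching uM; apply/allP => p /inG /and3P[pG Lp cp].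
by rewrite size_cat ltn_addr //= Lp nth_cat pG.
Qed.

Lemma mcm_eq_rows M : is_matching G L M -> size M = size G -> mcm_eq G L (size G).
Proof. by move=> MG szM; split; [exists M | apply: size_matching_le_rows]. Qed.

Lemma mcm_eq_cols M s :
  {subset L <= s} -> is_matching G L M -> size M = size s -> mcm_eq G L (size s).
Proof. by move=> Ls MG szM; split; [exists M | move=> M'; apply: size_matching_le_cols]. Qed.

Lemma is_matching_subst i c M :
  (forall r, r < size G -> i \in nth [::] G r ->
     [/\ L c, c \in nth [::] G r & forall r', r' < size G -> c \in nth [::] G r' -> r' = r]) ->
  is_matching G (fun j => (j == i) || L j) M ->
  is_matching G L [seq if p.2 == i then (p.1, c) else p | p <- M].
Proof.
move=> priv /andP[/andP[u1 u2] /allP inG].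
have same p q : p \in M -> q \in M -> p.2 = i -> q.2 = c -> p = q.
  move=> pM qM pi qc; apply: (uniq_map_inj_in u1) => //.
  have /and3P[pG _ ip] := inG p pM; have /and3P[qG _ cq] := inG q qM.
  rewrite pi in ip; rewrite qc in cq.
  by have [_ _ /(_ _ qG cq) ->] := priv _ pG ip.
rewrite /is_matching -!map_comp.
have -> : [seq (fst \o (fun p => if p.2 == i then (p.1, c) else p)) p | p <- M] = map fst M.
  by apply: eq_map => p /=; case: ifP.
rewrite u1 /=; apply/andP; split.
  have -> : [seq (snd \o (fun p => if p.2 == i then (p.1, c) else p)) p | p <- M]
          = [seq (if x == i then c else x) | x <- map snd M].
    by rewrite -map_comp; apply: eq_map => p /=; case: ifP.
  rewrite map_inj_in_uniq ?u2 // => _ _ /mapP[p pM ->] /mapP[q qM ->].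
  have [pi|pi] := eqVneq p.2 i; have [qi|qi] := eqVneq q.2 i => //; first by rewrite pi qi.
  - by move=> qc; move: qi; rewrite -(same p q) // pi eqxx.
  - by move=> pc; move: pi; rewrite -(same q p) // qi eqxx.
apply/allP => _ /mapP[p pM ->]; have /and3P[pG Lp ip] := inG p pM.
have [pi|pi] := eqVneq p.2 i; last by rewrite /= pG ip andbT; case/orP: Lp; rewrite ?(negPf pi).
by rewrite pi in ip; have [Lc cp _] := priv _ pG ip; rewrite /= pG Lc cp.
Qed.

End Matchings.

Lemma not_removed_of_subst m A G i c :
  (forall r, r < size G -> i \in nth [::] G r ->
     [/\ Bset m A i c, c \in nth [::] G r &
         forall r', r' < size G -> c \in nth [::] G r' -> r' = r]) ->
  ~ removed m A G i.
Proof.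
move=> priv [_ [b [[[M [MG <-]] _] [[_ maxB] szM]]]].
by have := maxB _ (is_matching_subst priv MG); rewrite size_map szM addn1 ltnn.
Qed.

Lemma mem_row_Bset m A i j :
  inm m i -> (forall k, k \in A i -> inm m k) -> (j \in i :: A i) = inm m j && ~~ Bset m A i j.
Proof.
move=> im Am; rewrite in_cons /Bset; have [->|ji] /= := eqVneq j i.
  by rewrite im !andbF.
rewrite andbT; case: (boolP (j \in A i)) => [/Am ->//|_].
by rewrite andbT; case: (inm m j).
Qed.

Section I7.
Variable l : nat.
Local Notation B := (Bset (5*l+3) (A7 l)).

Definition L12 j := L1 l j || L2 l j.
Definition paired7 j := (L1 l j && odd j) || (L2 l j && ~~ odd j).
Definition a7 v := 2 * (v - (4*l+2)) - 1.
Definition b7 v := 2 * (v - (3*l+2)).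
Definition in_pair7 v j := (j == a7 v) || (j == b7 v).
Definition partner7 i := if i <= 2*l+1 then i + (2*l+1) else i - (2*l+1).
Definition row7 v := v :: A7 l v.

Lemma mem_A7 i j : (j \in A7 l i) = inm (5*l+3) j && inA7 l i j.
Proof. by rewrite mem_filter mem_iota andbC /inm; congr andb; lia. Qed.

Lemma mem_A7_L3 v j : L3 l v -> (j \in A7 l v) = in_pair7 v j.
Proof.
move=> v3; rewrite mem_A7 /inA7 /in_pair7 /a7 /b7.
have [-> ->] : L1 l v = false /\ L2 l v = false by move: v3; rewrite /L1 /L2 /L3; lia.
by rewrite v3 /=; move: v3; rewrite /inm /L3; lia.
Qed.


Lemma row7_L3 v j : L3 l v -> (j \in row7 v) = (j == v) || in_pair7 v j.
Proof. by move=> v3; rewrite in_cons mem_A7_L3. Qed.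


Lemma row7_compl w j : inm (5*l+3) w -> (j \in row7 w) = inm (5*l+3) j && ~~ B w j.
Proof. by move=> wm; apply: mem_row_Bset => // k; rewrite mem_A7 => /andP[]. Qed.


Lemma L12_inm j : L12 j -> inm (5*l+3) j.
Proof. by rewrite /L12 /L1 /L2 /inm; lia. Qed.


Lemma L12_cases i : L12 i ->
  [\/ L1 l i /\ odd i, L1 l i /\ ~~ odd i, L2 l i /\ ~~ odd i | L2 l i /\ odd i].
Proof. by rewrite /L12; case: (odd i) => /orP[] ?; constructor. Qed.

Lemma Bset7E i j : L12 i ->
  B i j = paired7 j && ((odd j == odd i) (+) ((j == i) || (j == partner7 i))).
Proof.
move=> hi; rewrite /Bset mem_A7 /inm /inA7 /paired7 /partner7.
have [L3i iL1] : L3 l i = false /\ (i <= 2*l+1) = L1 l i.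
  by move: hi; rewrite /L12 /L1 /L2 /L3; lia.
case/L12_cases: hi => -[Li oi]; rewrite L3i iL1 Li ?oi ?(negbTE oi) /=;
  [ | | have -> : L1 l i = false by move: Li; rewrite /L1 /L2; lia ..];
  move: Li oi; rewrite /L1 /L2 /L3 /=; by case: (boolP (odd j)) => /= oj; lia.
Qed.

Lemma in_pair7_paired v j : L3 l v -> in_pair7 v j -> paired7 j.
Proof. by rewrite /L3 /in_pair7 /paired7 /a7 /b7 /L1 /L2; lia. Qed.

Lemma paired7_in_pair j : paired7 j -> exists2 v, L3 l v & in_pair7 v j.
Proof.
rewrite /paired7 /L1 /L2 => pj; case: (leqP j (2*l+1)) => jl.
  by exists ((j+1)./2 + (4*l+2)); rewrite /L3 /in_pair7 /a7 /b7; lia.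
by exists (j./2 + (3*l+2)); rewrite /L3 /in_pair7 /a7 /b7; lia.
Qed.

Lemma in_pair7_inj v v' j : L3 l v -> L3 l v' -> in_pair7 v j -> in_pair7 v' j -> v = v'.
Proof. by rewrite /L3 /in_pair7 /a7 /b7; lia. Qed.

Lemma paired7_L12 j : paired7 j -> L12 j.
Proof. by rewrite /paired7 /L12; case/orP=> /andP[->]; rewrite ?orbT. Qed.

Lemma paired7_a7 v : L3 l v -> paired7 (a7 v).
Proof. by rewrite /L3 /paired7 /a7 /L1; lia. Qed.

Lemma partner7_a7 v : L3 l v -> partner7 (a7 v) = b7 v.
Proof. by rewrite /L3 /partner7 /a7 /b7 => v3; rewrite ifT; lia. Qed.

Lemma L12_partner7 i : L12 i -> L12 (partner7 i).
Proof. by rewrite /L12 /L1 /L2 /partner7; case: ifP; lia. Qed.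

Lemma partner7K i : L12 i -> partner7 (partner7 i) = i.
Proof. by rewrite /L12 /L1 /L2 /partner7; case: ifP; case: ifP; lia. Qed.

Lemma eq_partner7 i j : L12 i -> L12 j -> (partner7 i == j) = (i == partner7 j).
Proof. by move=> i12 j12; apply/eqP/eqP => [<-|->]; rewrite partner7K. Qed.

Lemma partner7_inj i j : L12 i -> L12 j -> (partner7 i == partner7 j) = (i == j).
Proof. by move=> i12 j12; rewrite eq_partner7 ?partner7K ?L12_partner7. Qed.

Lemma odd_partner7 i : L12 i -> odd (partner7 i) = ~~ odd i.
Proof. by rewrite /L12 /L1 /L2 /partner7; case: ifP; lia. Qed.

Lemma paired7_partner i : L12 i -> paired7 (partner7 i) = paired7 i.
Proof.
move=> i12; rewrite /paired7 odd_partner7 //; move: i12.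
by rewrite /L12 /L1 /L2 /partner7; case: ifP; case: (odd i); lia.
Qed.

Lemma Bset7_paired i j : L12 i -> B i j -> paired7 j.
Proof. by move=> i12; rewrite Bset7E // => /andP[]. Qed.

Lemma in_pair7_partner v i : L3 l v -> L12 i -> in_pair7 v (partner7 i) = in_pair7 v i.
Proof.
move=> v3 i12; have a12 := paired7_L12 (paired7_a7 v3).
by rewrite /in_pair7 -(partner7_a7 v3) eq_partner7 // partner7_inj // orbC.
Qed.

Lemma Bset7_transversal v i : L3 l v -> L12 i -> B i (a7 v) = ~~ B i (b7 v).
Proof.
move=> v3 i12; have pa := paired7_a7 v3; have a12 := paired7_L12 pa.
rewrite -(partner7_a7 v3) !Bset7E // paired7_partner // odd_partner7 //.
rewrite eq_partner7 // partner7_inj // pa.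
by case: (odd _); case: (odd i); case: (_ == i); case: (_ == partner7 i).
Qed.

Lemma Bset7_partner i : paired7 i -> B i (partner7 i).
Proof.
move=> pi; have i12 := paired7_L12 pi.
by rewrite Bset7E ?paired7_partner ?odd_partner7 // pi eqxx orbT; case: (odd i).
Qed.

Lemma Bset7_partner_compl w i : L12 w -> i != w -> B w i -> ~~ B w (partner7 i).
Proof.
move=> w12 iw Bwi; have i12 := paired7_L12 (Bset7_paired w12 Bwi).
move: Bwi; rewrite !Bset7E ?paired7_partner ?odd_partner7 ?eq_partner7 ?partner7K ?L12_partner7 //.
by rewrite (negbTE iw); case: (odd i); case: (odd w); case: (i == partner7 w); case: (paired7 i).
Qed.

Lemma size_A7_L3 v : L3 l v -> size (A7 l v) <= 2.
Proof.
move=> v3; apply: (@uniq_leq_size _ _ [:: a7 v; b7 v]); first exact/filter_uniq/iota_uniq.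
by move=> j; rewrite mem_A7_L3 // !inE.
Qed.

Lemma unpaired_in_A7 w j : L12 w -> inm (5*l+3) j -> ~~ paired7 j -> j != w -> j \in A7 l w.
Proof.
move=> w12 jm jp jw; have := row7_compl j (L12_inm w12).
rewrite in_cons (negbTE jw) jm /= => ->; apply: contra jp; exact: Bset7_paired.
Qed.

Lemma size_A7_L12 w : 0 < l -> L12 w -> 2 < size (A7 l w).
Proof.
move=> l_gt0 w12; pose c := if w == 2 then 2*l+3 else 2.
have cw : c != w by rewrite /c; case: ifP => /eqP; lia.
apply: (@uniq_leq_size _ [:: 4*l+3; 4*l+4; c]); first by rewrite /= !inE /c; case: ifP; lia.
move=> j /[!inE] jc; apply: unpaired_in_A7 => //; move: jc cw w12;
  rewrite /c /inm /paired7 /L12 /L1 /L2; case: ifP; lia.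
Qed.

Definition pick7 i v := if B i (a7 v) then a7 v else b7 v.

Lemma in_pair7_pick7 i v : in_pair7 v (pick7 i v).
Proof. by rewrite /pick7 /in_pair7; case: ifP; rewrite eqxx ?orbT. Qed.

Lemma Bset7_pick7 i v : L3 l v -> L12 i -> B i (pick7 i v).
Proof.
by move=> v3 i12; rewrite /pick7; case: ifP => // /negbT; rewrite Bset7_transversal // negbK.
Qed.

Lemma Bset7_sub_pick7 i j : L12 i -> B i j -> exists2 v, L3 l v & j = pick7 i v.
Proof.
move=> i12 Bij; have [v v3 pv] := paired7_in_pair (Bset7_paired i12 Bij).
exists v => //; rewrite /pick7; case/orP: pv => /eqP jv.
  by rewrite -jv Bij.
by rewrite Bset7_transversal // -jv Bij.
Qed.

Lemma uniq_map_in_pair7 (f : nat -> nat) S : uniq S -> {subset S <= L3 l} ->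
  (forall v, v \in S -> in_pair7 v (f v)) -> uniq (map f S).
Proof.
move=> uS S3 fS; rewrite map_inj_in_uniq // => v v' vS v'S fvv'.
by apply: (in_pair7_inj (S3 _ vS) (S3 _ v'S) (fS _ vS)); rewrite fvv' fS.
Qed.

Lemma L3_missing S : size S < l+1 -> exists2 v, L3 l v & v \notin S.
Proof.
move=> Sl; have [/hasP[v]|/hasPn iS] := boolP (has (fun v => v \notin S) (iota (4*l+3) (l+1))).
  by rewrite mem_iota => vL ?; exists v; rewrite // /L3; lia.
have /uniq_leq_size : uniq (iota (4*l+3) (l+1)) := iota_uniq _ _.
by move=> /(_ S (fun v vI => negbNE (iS v vI))); rewrite size_iota; lia.
Qed.

Lemma L3_full S : uniq S -> {subset S <= L3 l} -> l+1 <= size S ->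
  S =i L3 l /\ size S = l+1.
Proof.
move=> uS S3 Sl; have SI : {subset S <= iota (4*l+3) (l+1)}.
  by move=> v /S3; rewrite mem_iota /L3; lia.
have [|-> eqS] := uniq_min_size uS SI; first by rewrite size_iota.
rewrite size_iota; split=> // v.
by rewrite eqS mem_iota /L3; apply/idP/idP; lia.
Qed.

Lemma not_removed_L3_rows S i : uniq S -> {subset S <= L3 l} ->
  i \notin S -> ~ removed (5*l+3) (A7 l) (map row7 S) i.
Proof.
move=> uS S3 iS; apply: (not_removed_of_subst (c := partner7 i)) => r.
rewrite size_map => rS; rewrite (nth_map 0) //.
have v3 := S3 _ (mem_nth 0 rS); rewrite row7_L3 // => /orP[/eqP iv | piv].
  by rewrite iv mem_nth in iS.
have pi := in_pair7_paired v3 piv; have i12 := paired7_L12 pi.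
have ppv : in_pair7 (nth 0 S r) (partner7 i) by rewrite in_pair7_partner.
split=> [||r']; [exact: Bset7_partner | by rewrite row7_L3 // ppv orbT |].
move=> r'S; rewrite (nth_map 0) //.
have v'3 := S3 _ (mem_nth 0 r'S); rewrite row7_L3 // => /orP[/eqP pv' | ppv'].
  by move: v'3 (L12_partner7 i12); rewrite -pv' /L3 /L12 /L1 /L2; lia.
by apply/eqP; rewrite -(nth_uniq 0 r'S rS uS); apply/eqP/(in_pair7_inj v'3 v3 ppv').
Qed.

Lemma sdr_with_L12_row w i : L12 w -> L12 i -> i != w ->
  exists f x, [/\ forall v, L3 l v -> in_pair7 v (f v) && ((f v == i) || B i (f v)),
                  forall v, L3 l v -> f v != x,
                  x \in row7 w & (x == i) || B i x].
Proof.
move=> w12 i12 iw; have [iw_row | iw_row] := boolP (i \in row7 w).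
  exists (pick7 i), i; split=> [v v3|v v3||] //; last by rewrite eqxx.
    by rewrite in_pair7_pick7 (Bset7_pick7 v3 i12) orbT.
  by have /and3P[] := Bset7_pick7 v3 i12.
have Bwi : B w i by move: iw_row; rewrite row7_compl ?(L12_inm w12) // (L12_inm i12) /= negbK.
have pi := Bset7_paired w12 Bwi.
exists (fun v => if pick7 i v == partner7 i then i else pick7 i v), (partner7 i).
split=> [v v3|v v3||]; last by rewrite Bset7_partner ?orbT.
- case: ifP => [/eqP pv|_]; last by rewrite in_pair7_pick7 (Bset7_pick7 v3 i12) orbT.
  by rewrite eqxx andbT -in_pair7_partner -?pv ?in_pair7_pick7 // paired7_L12.
- case: ifP => [_|/negbT //]; apply/eqP => /(congr1 odd).
  by rewrite odd_partner7 ?paired7_L12 //; case: (odd i).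
- rewrite row7_compl ?(L12_inm w12) // (L12_inm (L12_partner7 (paired7_L12 pi))) /=.
  exact: Bset7_partner_compl.
Qed.

Lemma removed_after_L12_row S w i : uniq S -> S =i L3 l -> L12 w -> L12 i -> i != w ->
  removed (5*l+3) (A7 l) (rcons (map row7 S) (row7 w)) i.
Proof.
move=> uS SL w12 i12 iw; have S3 : {subset S <= L3 l} by move=> v; rewrite SL.
set G := rcons (map row7 S) (row7 w).
have szG : size G = (size S).+1 by rewrite size_rcons size_map.
exists (size S).+1, (size S); split; [|split; [|by rewrite addn1]].
- have [f [x [fS fx xw xB]]] := sdr_with_L12_row w12 i12 iw.
  have [|||M MG szM] := @matching_of_sdr G (fun j => (j == i) || B i j) (rcons (map f S) x).
  + rewrite rcons_uniq uniq_map_in_pair7 // => [|v /S3 /fS /andP[] //].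
    by rewrite andbT; apply/mapP => -[v /S3 v3 xfv]; move: (fx v v3); rewrite xfv eqxx.
  + by rewrite szG size_rcons size_map.
  + rewrite zip_rcons ?size_map // zip_map all_rcons all_map xw xB /=.
    by apply/allP => v /S3 v3 /=; have /andP[pv ->] := fS v v3; rewrite row7_L3 // pv orbT.
  by rewrite -szG; apply: mcm_eq_rows MG szM.
- have [|||M MG szM] := @matching_of_sdr (map row7 S) (B i) (map (pick7 i) S).
  + by apply: uniq_map_in_pair7 => // v _; apply: in_pair7_pick7.
  + by rewrite !size_map.
  + rewrite zip_map all_map; apply/allP => v /S3 v3 /=.
    by rewrite Bset7_pick7 // row7_L3 // in_pair7_pick7 orbT.
  rewrite -(size_map (pick7 i) S); apply: (mcm_eq_cols (M := M)).
  + by move=> j /(Bset7_sub_pick7 i12)[v v3 ->]; apply: map_f; rewrite SL.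
  + by rewrite /G -cats1; apply: is_matching_catr.
  + by rewrite szM !size_map.
Qed.

Definition L3_phase (S N : seq nat) (G : seq (seq nat)) :=
  [/\ uniq S, {subset S <= L3 l}, G = map row7 S &
      forall i, (i \in N) = inm (5*l+3) i && (i \notin S)].

Lemma L3_phase_start : L3_phase [::] (iota 1 (5*l+3)) [::].
Proof. by split=> // i; rewrite mem_iota in_nil andbT /inm; lia. Qed.

Lemma L3_phase_mem1 S N G : L3_phase S N G -> 1 \in N.
Proof.
case=> _ S3 _ ->; rewrite /inm; apply/andP; split; first lia.
by apply/negP => /S3; rewrite /L3; lia.
Qed.

Lemma L3_phase_min_L3 S N G w : 0 < l -> L3_phase S N G -> size S < l+1 -> w \in N ->
  (forall v, v \in N -> size (A7 l w) <= size (A7 l v)) -> L3 l w.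
Proof.
move=> l_gt0 [_ _ _ memN] Sl wN wmin; have [v v3 vS] := L3_missing Sl.
have vN : v \in N by rewrite memN vS andbT; move: v3; rewrite /inm /L3; lia.
apply/negPn/negP => w3; have w12 : L12 w by move: wN w3; rewrite memN /inm /L12 /L1 /L2 /L3; lia.
by have := wmin v vN; have := size_A7_L3 v3; have := size_A7_L12 l_gt0 w12; lia.
Qed.

Lemma L3_phase_not_removed S N G w i : L3_phase S N G -> w \in N -> L3 l w ->
  i \in N -> i != w -> ~ removed (5*l+3) (A7 l) (rcons G (w :: A7 l w)) i.
Proof.
move=> [uS S3 -> memN] wN w3; rewrite !memN => /andP[_ iS] iw.
move: wN; rewrite memN => /andP[_ wS]; rewrite -map_rcons; apply: not_removed_L3_rows.
- by rewrite rcons_uniq wS.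
- by move=> v; rewrite mem_rcons inE => /orP[/eqP->|/S3].
- by rewrite mem_rcons inE negb_or iw.
Qed.

Lemma L3_phase_rcons S N G w N' : L3_phase S N G -> w \in N -> L3 l w ->
  (forall i, i \in N' <->
     [/\ i \in N, i != w & ~ removed (5*l+3) (A7 l) (rcons G (w :: A7 l w)) i]) ->
  L3_phase (rcons S w) N' (rcons G (w :: A7 l w)).
Proof.
move=> ph wN w3 memN'; have [uS S3 eG memN] := ph.
have wS : w \notin S by move: wN; rewrite memN => /andP[].
split=> [||| i]; first by rewrite rcons_uniq wS.
- by move=> v; rewrite mem_rcons inE => /orP[/eqP->|/S3].
- by rewrite eG map_rcons.
rewrite mem_rcons inE negb_or; apply/idP/idP => [/memN' [iN -> _] | /and3P[im iw iS]].
  by move: iN; rewrite memN.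
have iN : i \in N by rewrite memN im.
by apply/memN'; split=> //; apply: L3_phase_not_removed ph wN w3 iN iw.
Qed.

Lemma L3_phase_last S N G w i : L3_phase S N G -> l+1 <= size S -> w \in N -> i \in N -> i != w ->
  removed (5*l+3) (A7 l) (rcons G (w :: A7 l w)) i.
Proof.
move=> [uS S3 -> memN] Sl; have [SL _] := L3_full uS S3 Sl.
have N12 j : j \in N -> L12 j by rewrite memN SL /inm /L12 /L1 /L2 /L3; lia.
by move=> /N12 w12 /N12 i12 iw; apply: removed_after_L12_row.
Qed.

Lemma umcd7_terminates k S N G : 0 < l -> umcd_reach (5*l+3) (A7 l) N G ->
  L3_phase S N G -> size S + k = l+1 -> exists G', umcd_reach (5*l+3) (A7 l) [::] G'.
Proof.
move=> l_gt0; elim: k S N G => [|k IH] S N G reach ph szS;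
  have [w wN wmin] := seq_argmin (fun v => size (A7 l v)) (L3_phase_mem1 ph).
  have all_removed i : i \in [::] <->
      [/\ i \in N, i != w & ~ removed (5*l+3) (A7 l) (rcons G (w :: A7 l w)) i].
    by split=> // -[iN iw []]; apply: L3_phase_last ph _ wN iN iw; lia.
  by exists (rcons G (w :: A7 l w)); apply: umcd_step reach wN wmin all_removed.
have w3 := L3_phase_min_L3 l_gt0 ph (ltac:(lia)) wN wmin.
have memN' i : i \in [seq j <- N | j != w] <->
    [/\ i \in N, i != w & ~ removed (5*l+3) (A7 l) (rcons G (w :: A7 l w)) i].
  rewrite mem_filter andbC; split=> [/andP[iN iw] | [-> -> //]].
  by split=> //; apply: L3_phase_not_removed ph wN w3 iN iw.
apply: IH (umcd_step reach wN wmin memN') (L3_phase_rcons ph wN w3 memN') _.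
by rewrite size_rcons addSnnS.
Qed.

Lemma umcd7_invariant N G : 0 < l -> umcd_reach (5*l+3) (A7 l) N G ->
  (exists S, L3_phase S N G) \/ ((forall i, i \notin N) /\ size G = l+2).
Proof.
move=> l_gt0; elim=> [|N0 G0 w N' _ IH wN wmin memN'].
  by left; exists [::]; apply: L3_phase_start.
case: IH => [[S ph] | [N0nil _]]; last by rewrite (negbTE (N0nil w)) in wN.
have [Sl | Sl] := ltnP (size S) (l+1).
  have w3 := L3_phase_min_L3 l_gt0 ph Sl wN wmin.
  by left; exists (rcons S w); apply: L3_phase_rcons ph wN w3 memN'.
right; split.
  by move=> i; apply/negP => /memN' [iN iw []]; apply: L3_phase_last ph Sl wN iN iw.
case: ph => uS S3 -> _; have [_ szS] := L3_full uS S3 Sl.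
by rewrite size_rcons size_map szS addn1 addn2.
Qed.

End I7.

Unset Implicit Arguments.

Theorem proposition18 (l : nat) : 1 <= l ->
  (exists G, umcd_reach (5*l+3) (A7 l) [::] G) /\
  (forall G, umcd_reach (5*l+3) (A7 l) [::] G -> size G = l + 2).
Proof.
move=> l_gt0; split.
  exact: (umcd7_terminates (k := l+1) l_gt0 (umcd_start _ _) (L3_phase_start l)).
move=> G /(umcd7_invariant l_gt0) [[S /L3_phase_mem1] | [_ ->]] //.
Qed.
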